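(* Let $A_0,A_1,\ldots,A_n\in M_d(\mathbb C)$ and $X_{\mathrm{free}}=A_0\otimes1+\sum_{i=1}^nA_i\otimes s_i$. For every integer $p\ge2$, \[ \varphi[X_{\mathrm{free}}^p]=\varphi[X_{\mathrm{free}}^{p-1}]\,A_0+\sum_{i=1}^n\sum_{k=0}^{p-2}\varphi[X_{\mathrm{free}}^k]\,A_i\,\varphi[X_{\mathrm{free}}^{p-2-k}]\,A_i . \] Moreover, for every $B\in M_d(\mathbb C)$ and integers $p,q\ge1$, \begin{align*} \varphi[X_{\mathrm{free}}^p(B\otimes1)X_{\mathrm{free}}^q]&=\varphi[X_{\mathrm{free}}^p(B\otimes1)X_{\mathrm{free}}^{q-1}]\,A_0+\sum_{i=1}^n\sum_{k=0}^{p-1}\varphi[X_{\mathrm{free}}^k]\,A_i\,\varphi[X_{\mathrm{free}}^{p-1-k}(B\otimes1)X_{\mathrm{free}}^{q-1}]\,A_i\\ &\quad+\mathbb 1_{\{q\ge2\}}\sum_{i=1}^n\sum_{k=0}^{q-2}\varphi[X_{\mathrm{free}}^p(B\otimes1)X_{\mathrm{free}}^k]\,A_i\,\varphi[X_{\mathrm{free}}^{q-2-k}]\,A_i . \end{align*}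
   Context: $(\mathcal A,\tau)$ is a $C^*$-probability space with faithful tracial state $\tau$ containing freely independent standard semicircular elements $s_1,\ldots,s_n$; $1$ is its unit. $\varphi=\mathrm{Id}\otimes\tau:M_d(\mathbb C)\otimes\mathcal A\to M_d(\mathbb C)$ is the partial trace, i.e. $\varphi[\sum_jM_j\otimes a_j]=\sum_j\tau(a_j)M_j$; $X^0=I\otimes1$. *)

From HB Require Import structures.
From mathcomp Require Import all_boot all_order all_algebra.
From mathcomp Require Import complex.
From mathcomp Require Import reals.
Set Implicit Arguments. Unset Strict Implicit. Unset Printing Implicit Defensive.
Import Order.TTheory GRing.Theory Num.Theory.
Local Open Scope ring_scope.

Definition peval (C : nzRingType) (A : lalgType C) (p : {poly C}) (x : A) : A :=
  \sum_(i < size p) p`_i *: x ^+ i.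

Definition catalan (m : nat) : nat := 'C(m.*2, m) %/ m.+1.

Definition star_prob_space (R : realType) (A : algType R[i])
  (star : A -> A) (tau : A -> R[i]) : Prop :=
  [/\ [/\ (forall a b : A, star (a + b) = star a + star b),
         (forall (c : R[i]) (a : A), star (c *: a) = c^* *: star a),
         (forall a b : A, star (a * b) = star b * star a)
       & (forall a : A, star (star a) = a)],
      [/\ (forall (a b : A) (c : R[i]), tau (c *: a + b) = c * tau a + tau b),
         tau 1 = 1
       & (forall a b : A, tau (a * b) = tau (b * a))],
      (forall a : A, 0 <= tau (star a * a))
    & (forall a : A, tau (star a * a) = 0 -> a = 0)].

Definition std_semicircular (R : realType) (A : algType R[i])
  (star : A -> A) (tau : A -> R[i]) (s : A) : Prop :=
  [/\ star s = s,
      (forall m, tau (s ^+ m.*2) = (catalan m)%:R)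
    & (forall m, tau (s ^+ m.*2.+1) = 0)].

(* Free independence of s_1, ..., s_n : the unital subalgebras generated by
   the s_i are free w.r.t. tau.  A word is a nonempty list of pairs
   (index, polynomial) with consecutive indices distinct. *)
Definition free_family (R : realType) (A : algType R[i]) (n : nat)
  (tau : A -> R[i]) (s : 'I_n -> A) : Prop :=
  forall l : seq ('I_n * {poly R[i]}),
    l != [::] ->
    sorted (fun u v => u.1 != v.1) l ->
    (forall u, u \in l -> tau (peval u.2 (s u.1)) = 0) ->
    tau (\prod_(u <- l) peval u.2 (s u.1)) = 0.

(* Elementary tensor M (x) a in M_d(C) (x) A, identified with M_d(A). *)
Definition tens (R : realType) (A : algType R[i]) (d : nat)
  (M : 'M[R[i]]_d) (a : A) : 'M[A]_d :=
  map_mx (fun c => c *: a) M.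

(* Partial trace phi = Id (x) tau : M_d(A) -> M_d(C), entrywise tau. *)
Definition ptr (R : realType) (A : algType R[i]) (d : nat)
  (tau : A -> R[i]) (X : 'M[A]_d) : 'M[R[i]]_d :=
  map_mx tau X.

Definition Xfree (R : realType) (A : algType R[i]) (d n : nat)
  (s : 'I_n -> A) (A0 : 'M[R[i]]_d) (Ai : 'I_n -> 'M[R[i]]_d) : 'M[A]_d :=
  tens A0 1 + \sum_(i < n) tens (Ai i) (s i).

(* For free semicircular s_1, ..., s_n the Schwinger-Dyson equation
   tau(w s_i) = sum_{w = u s_i v} tau(u) tau(v) holds for every word w.  We prove it
   for products of powers s_j^e, each possibly centred, by induction on the total
   degree: adjacent powers of the same s_j merge into one, and centring a power
   changes the defect of the equation by a multiple of the defect of a shorter word.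
   For a centred alternating word both sides vanish by freeness, except for a single
   power s_i^e, where the equation is the Catalan recursion of semicircular moments.
   The matrix identities follow by writing X^p and X^p (B (x) 1) X^q as products of
   pencils M_0 (x) 1 + sum_j M_j (x) s_j, expanding phi(P X) = phi(P) A_0 +
   sum_i phi(P (A_i (x) s_i)), and pairing the last s_i with each factor in turn. *)

From HB Require Import structures.
From mathcomp Require Import all_boot all_order all_algebra.
From mathcomp Require Import complex reals.
From mathcomp Require Import ring zify.
Set Implicit Arguments. Unset Strict Implicit. Unset Printing Implicit Defensive.
Import Order.TTheory GRing.Theory Num.Theory.
Local Open Scope ring_scope.

(* Ballot numbers; their convolution identity [ballot_conv] at [k = 0] is the
   Catalan recursion. *)
Definition ballot (u k : nat) : int :=
  'C(u.*2 + k, u)%:Z - 'C(u.*2 + k, u + k + 1)%:Z.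

Lemma ballot0n k : ballot 0 k = 1.
Proof. by rewrite /ballot double0 add0n bin0 bin_small //; lia. Qed.

Lemma ballotS0 u : ballot u.+1 0 = ballot u 1.
Proof.
rewrite /ballot.
have -> : (u.+1.*2 + 0 = (u.*2 + 1).+1)%N by rewrite doubleS; lia.
have -> : (u.+1 + 0 + 1 = u.+2)%N by lia.
have -> : (u + 1 + 1 = u.+2)%N by lia.
by rewrite !binS !PoszD; ring.
Qed.

Lemma ballotSS u k : ballot u.+1 k.+1 = ballot u.+1 k + ballot u k.+2.
Proof.
rewrite /ballot.
have -> : (u.+1.*2 + k.+1 = (u.+1.*2 + k).+1)%N by lia.
have -> : (u.*2 + k.+2 = u.+1.*2 + k)%N by rewrite doubleS; lia.
have -> : (u.+1 + k.+1 + 1 = (u.+1 + k + 1).+1)%N by lia.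
have -> : (u + k.+2 + 1 = (u.+1 + k + 1).+1)%N by lia.
by rewrite !binS !PoszD; ring.
Qed.

Lemma catalan_ballot m : (catalan m)%:Z = ballot m 0.
Proof.
rewrite /catalan /ballot addn0.
have h : (m.+1 * 'C(m.*2, m.+1) = m * 'C(m.*2, m))%N.
  by rewrite mul_bin_left -addnn addnK.
have e : ('C(m.*2, m) = m.+1 * ('C(m.*2, m) - 'C(m.*2, m.+1)))%N.
  by rewrite mulnBr h mulSn addnK.
rewrite [in X in (X %/ _)%N]e mulKn // addn1 addn0 -subzn //.
by rewrite -(@leq_pmul2l m.+1) // h leq_mul2r leqnSn orbT.
Qed.

Lemma ballot_conv u k :
  ballot u k.+1 = \sum_(a < u.+1) ballot a 0 * ballot (u - a) k.
Proof.
elim: {u k}(u.*2 + k).+1 {-2}u {-2}k (ltnSn (u.*2 + k)) => // N IH [|u] k hN.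
  by rewrite big_ord1 /= sub0n !ballot0n mul1r.
rewrite big_ord_recr /= subnn ballot0n.
case: k hN => [|k] hN.
  rewrite ballotSS IH; last by rewrite doubleS in hN *; lia.
  rewrite mulr1 addrC; congr (_ + _); apply: eq_bigr => a _.
  by rewrite subSn ?ballotS0 // -ltnS.
rewrite ballotSS (IH u.+1 k); last by lia.
rewrite (IH u k.+2); last by rewrite doubleS in hN *; lia.
rewrite big_ord_recr /= subnn !ballot0n addrAC; congr (_ + _).
rewrite -big_split /=; apply: eq_bigr => a _.
by rewrite subSn -1?ltnS // ballotSS -mulrDr.
Qed.

Lemma catalanS (R : nzRingType) m :
  (catalan m.+1)%:R = \sum_(a < m.+1) (catalan a)%:R * (catalan (m - a))%:R :> R.
Proof.
have := congr1 (intmul (1 : R)) (catalan_ballot m.+1).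
rewrite -pmulrn ballotS0 ballot_conv rmorph_sum /= => ->.
by apply: eq_bigr => a _; rewrite rmorphM /= -!catalan_ballot -!pmulrn.
Qed.

Lemma big_ord_even_odd (V : nmodType) k (F : nat -> V) :
  \sum_(a < k.*2.+1) F a = \sum_(b < k.+1) F b.*2 + \sum_(b < k) F b.*2.+1.
Proof.
elim: k => [|k IH]; first by rewrite !big_ord1 big_ord0 addr0.
rewrite doubleS (big_ord_recr k.*2.+2) (big_ord_recr k.*2.+1) /= IH.
rewrite (big_ord_recr k.+1) (big_ord_recr k (fun b => F b.*2.+1)) /= -doubleS.
by rewrite -!addrA; congr (_ + _); rewrite [RHS]addrC -addrA.
Qed.

Lemma big_pointed_cat (T : Type) (V : nmodType) (x0 : T)
    (F : seq T -> T -> seq T -> V) l1 l2 :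
  \sum_(0 <= r < size (l1 ++ l2)) F (take r (l1 ++ l2)) (nth x0 (l1 ++ l2) r) (drop r.+1 (l1 ++ l2)) =
  \sum_(0 <= r < size l1) F (take r l1) (nth x0 l1 r) (drop r.+1 l1 ++ l2)
  + \sum_(0 <= r < size l2) F (l1 ++ take r l2) (nth x0 l2 r) (drop r.+1 l2).
Proof.
rewrite size_cat (@big_cat_nat _ _ _ (size l1)) ?leq_addr //; congr (_ + _).
  apply: eq_big_nat => r /andP [_ r_l1].
  rewrite takel_cat ?(ltnW r_l1) // nth_cat r_l1 drop_cat; case: ltnP => // r_l1'.
  have -> : r.+1 = size l1 by apply/eqP; rewrite eqn_leq r_l1 r_l1'.
  by rewrite subnn drop0 drop_size.
rewrite -{1}[size l1]add0n big_addn addKn; apply: eq_bigr => r _.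
by rewrite take_cat nth_cat drop_cat -addSn !ltnNge !leq_addl /= !addnK.
Qed.

Section SemicircleMoments.
Variables (F : nzRingType) (mu : nat -> F).
Hypothesis mu_even : forall m, mu m.*2 = (catalan m)%:R.
Hypothesis mu_odd : forall m, mu m.*2.+1 = 0.

Lemma semicircle_moment_odd e : odd e -> mu e = 0.
Proof. by move=> oe; rewrite -(odd_double_half e) oe add1n mu_odd. Qed.

Lemma semicircle_momentS e : mu e.+1 = \sum_(a < e) mu a * mu (e.-1 - a).
Proof.
have [oe|ee] := boolP (odd e); last first.
  rewrite semicircle_moment_odd /= ?ee // big1 // => a _.
  have [oa|ea] := boolP (odd a); first by rewrite semicircle_moment_odd ?mul0r.
  rewrite [mu (_ - _)]semicircle_moment_odd ?mulr0 //.
  case: e ee a ea => [_ []//|e] /= /negPn oe a ea.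
  by rewrite oddB ?oe ?(negbTE ea) // -ltnS.
rewrite -(odd_double_half e) oe add1n /= -doubleS mu_even catalanS.
rewrite (big_ord_even_odd _ (fun a => mu a * mu (e./2.*2 - a))).
rewrite [X in _ + X]big1 ?addr0 => [|b _]; last first.
  by rewrite semicircle_moment_odd ?mul0r //= odd_double.
by apply: eq_bigr => b _; rewrite -doubleB !mu_even.
Qed.

End SemicircleMoments.

Lemma peval_horner_alg (C : nzRingType) (A : algType C) (p : {poly C}) (x : A) :
  peval p x = horner_alg x p.
Proof.
rewrite /horner_alg /horner_morph /= (@horner_coef_wide _ (size p)); last first.
  by rewrite map_polyE (leq_trans (size_Poly _)) // size_map.
by apply: eq_bigr => k _; rewrite coef_map /= mulr_algl.
Qed.

Lemma peval_XnC (C : nzRingType) (A : algType C) (e : nat) (c : C) (x : A) :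
  peval ('X^e - c%:P) x = x ^+ e - c *: 1.
Proof.
by rewrite peval_horner_alg rmorphB /= rmorphXn /= horner_algX horner_algC.
Qed.

Section LinearFunctional.
Variables (F : nzRingType) (V : lmodType F) (tau : V -> F).
Hypothesis tau_lin : forall (a b : V) (c : F), tau (c *: a + b) = c * tau a + tau b.

Lemma tauD a b : tau (a + b) = tau a + tau b.
Proof. by have := tau_lin a b 1; rewrite scale1r mul1r. Qed.

Lemma tau0 : tau 0 = 0.
Proof. by apply: (@addrI _ (tau 0)); rewrite -tauD !addr0. Qed.

Lemma tauZ c a : tau (c *: a) = c * tau a.
Proof. by have := tau_lin a 0 c; rewrite !addr0 tau0 addr0. Qed.

Lemma tauB a b : tau (a - b) = tau a - tau b.
Proof. by rewrite tauD -scaleN1r tauZ mulN1r. Qed.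

Lemma tau_sum (I : Type) (r : seq I) (P : pred I) (f : I -> V) :
  tau (\sum_(k <- r | P k) f k) = \sum_(k <- r | P k) tau (f k).
Proof. exact: (big_morph tau tauD tau0). Qed.

End LinearFunctional.

Section FreeSemicircularWords.
Variables (R : realType) (A : algType R[i]) (tau : A -> R[i]) (n : nat) (s : 'I_n -> A).
Hypothesis tau_lin : forall (a b : A) (c : R[i]), tau (c *: a + b) = c * tau a + tau b.
Hypothesis tau1 : tau 1 = 1.
Hypothesis tau_s_even : forall j m, tau (s j ^+ m.*2) = (catalan m)%:R.
Hypothesis tau_s_odd : forall j m, tau (s j ^+ m.*2.+1) = 0.
Hypothesis s_free : free_family tau s.

Definition moment j e := tau (s j ^+ e).

Lemma moment1 j : moment j 1 = 0.
Proof. exact: (tau_s_odd j 0). Qed.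

Definition atom := ('I_n * nat * bool)%type.
Definition atom_idx (x : atom) : 'I_n := x.1.1.
Definition atom_exp (x : atom) : nat := x.1.2.
Definition atom_centred (x : atom) : bool := x.2.

Definition atom_val (x : atom) : A :=
  s (atom_idx x) ^+ atom_exp x
  - (if atom_centred x then moment (atom_idx x) (atom_exp x) else 0) *: 1.

Definition word_val (l : seq atom) : A := \prod_(x <- l) atom_val x.

Definition alternating (l : seq atom) :=
  sorted (fun j k : 'I_n => j != k) (map atom_idx l).

Lemma word_val_nil : word_val [::] = 1. Proof. exact: big_nil. Qed.

Lemma word_val_cons x l : word_val (x :: l) = atom_val x * word_val l.
Proof. exact: big_cons. Qed.

Lemma word_val_cat l1 l2 : word_val (l1 ++ l2) = word_val l1 * word_val l2.
Proof. exact: big_cat. Qed.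

Lemma word_val_rcons l x : word_val (rcons l x) = word_val l * atom_val x.
Proof. by rewrite -cats1 word_val_cat word_val_cons word_val_nil mulr1. Qed.

Lemma atom_val_uncentred j e : atom_val (j, e, false) = s j ^+ e.
Proof. by rewrite /atom_val /= scale0r subr0. Qed.

Lemma atom_val_centred j e :
  atom_val (j, e, true) = (- moment j e) *: 1 + atom_val (j, e, false).
Proof. by rewrite atom_val_uncentred /atom_val /= scaleNr addrC. Qed.

Lemma atom_val_centred1 j : atom_val (j, 1%N, true) = s j.
Proof. by rewrite /atom_val /= moment1 scale0r subr0. Qed.

Lemma free_centred_word l :
  l != [::] -> all atom_centred l -> alternating l -> tau (word_val l) = 0.
Proof.
move=> l_nz l_c l_alt; pose poly_of x := 'X^(atom_exp x) - (moment (atom_idx x) (atom_exp x))%:P.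
have -> : word_val l = \prod_(x <- l) peval (poly_of x) (s (atom_idx x)).
  by apply: eq_big_seq => x xl; rewrite peval_XnC /atom_val (allP l_c x xl).
rewrite -(big_map (fun x => (atom_idx x, poly_of x)) xpredT (fun u => peval u.2 (s u.1))).
apply: s_free; first by case: l l_nz {l_c l_alt}.
  by rewrite sorted_map; rewrite /alternating sorted_map in l_alt.
move=> u /mapP [x _ ->] /=.
by rewrite peval_XnC (tauB tau_lin) (tauZ tau_lin) tau1 mulr1 subrr.
Qed.

Lemma alternating_rcons2 l x y :
  alternating (rcons l x) -> atom_idx y != atom_idx x -> alternating (rcons (rcons l x) y).
Proof.
rewrite /alternating !map_rcons => + yx; case: (map atom_idx l) => [|j w] /=.
  by rewrite andbT eq_sym.
rewrite !(rcons_path (fun j k : 'I_n => j != k)) last_rcons.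
by move=> ->; rewrite eq_sym.
Qed.

Lemma tau_word_val_mul_pow l j a :
  l != [::] -> all atom_centred l -> alternating (rcons l (j, a, true)) ->
  tau (word_val l * s j ^+ a) = 0.
Proof.
move=> l_nz l_c l_alt.
have -> : word_val l * s j ^+ a = word_val (rcons l (j, a, true)) + moment j a *: word_val l.
  by rewrite word_val_rcons /atom_val /= mulrBr -scalerAr mulr1 subrK.
have l_alt' : alternating l by move: l_alt; rewrite -cats1 /alternating map_cat => /cat_sorted2 [].
rewrite (tauD tau_lin) (tauZ tau_lin) !free_centred_word ?mulr0 ?addr0 ?all_rcons ?l_c //.
by case: l l_nz {l_c l_alt l_alt'}.
Qed.

Lemma tau_pow_mul_word_val l j a :
  l != [::] -> all atom_centred l -> alternating ((j, a, true) :: l) ->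
  tau (s j ^+ a * word_val l) = 0.
Proof.
move=> l_nz l_c l_alt.
have -> : s j ^+ a * word_val l = word_val ((j, a, true) :: l) + moment j a *: word_val l.
  by rewrite word_val_cons /atom_val /= mulrBl -scalerAl mul1r subrK.
rewrite (tauD tau_lin) (tauZ tau_lin) !free_centred_word ?mulr0 ?addr0 //.
exact: path_sorted l_alt.
Qed.

Variable i : 'I_n.

(* The pairings of the final [s_i] with the letters of [x] in the word [P x Q];
   centring is irrelevant since a scalar contains no letter [s_i]. *)
Definition contraction (x : atom) (P Q : A) : R[i] :=
  if atom_idx x == i then
    \sum_(a < atom_exp x) tau (P * s i ^+ a) * tau (s i ^+ ((atom_exp x).-1 - a) * Q)
  else 0.

Fixpoint contractions (P : A) (l : seq atom) (Q : A) : R[i] :=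
  if l is x :: l' then contraction x P (word_val l' * Q) + contractions (P * atom_val x) l' Q
  else 0.

Definition sd_defect (l : seq atom) := tau (word_val l * s i) - contractions 1 l 1.

Lemma contractions_cat P l1 l2 Q :
  contractions P (l1 ++ l2) Q =
  contractions P l1 (word_val l2 * Q) + contractions (P * word_val l1) l2 Q.
Proof.
elim: l1 P => [|x l1 IH] P /=; first by rewrite word_val_nil mulr1 add0r.
by rewrite IH word_val_cat word_val_cons -!mulrA addrA.
Qed.

Lemma contraction_linl x c P P' Q :
  contraction x (c *: P + P') Q = c * contraction x P Q + contraction x P' Q.
Proof.
rewrite /contraction; case: ifP => _; last by rewrite mulr0 addr0.
rewrite big_distrr -big_split /=; apply: eq_bigr => a _.
by rewrite mulrDl -scalerAl tau_lin; ring.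
Qed.

Lemma contraction_linr x c P Q Q' :
  contraction x P (c *: Q + Q') = c * contraction x P Q + contraction x P Q'.
Proof.
rewrite /contraction; case: ifP => _; last by rewrite mulr0 addr0.
rewrite big_distrr -big_split /=; apply: eq_bigr => a _.
by rewrite mulrDr -scalerAr tau_lin; ring.
Qed.

Lemma contractions_linl l c P P' Q :
  contractions (c *: P + P') l Q = c * contractions P l Q + contractions P' l Q.
Proof.
elim: l P P' => [|x l IH] P P' /=; first by rewrite mulr0 addr0.
by rewrite contraction_linl mulrDl -scalerAl IH; ring.
Qed.

Lemma contractions_linr l c P Q Q' :
  contractions P l (c *: Q + Q') = c * contractions P l Q + contractions P l Q'.
Proof.
elim: l P => [|x l IH] P /=; first by rewrite mulr0 addr0.
by rewrite mulrDr -scalerAr contraction_linr IH; ring.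
Qed.

Definition defect_around pre post (y : A) :=
  tau (word_val pre * y * word_val post * s i)
  - contractions 1 pre (y * word_val post) - contractions (word_val pre * y) post 1.

Lemma sd_defect_atom pre x post :
  sd_defect (pre ++ x :: post) =
  defect_around pre post (atom_val x) - contraction x (word_val pre) (word_val post).
Proof.
rewrite /sd_defect /defect_around contractions_cat word_val_cat word_val_cons /=.
by rewrite !mulr1 !mul1r !mulrA; ring.
Qed.

Lemma sd_defect_cat pre post : sd_defect (pre ++ post) = defect_around pre post 1.
Proof. by rewrite /sd_defect /defect_around contractions_cat word_val_cat !mulr1 !mul1r; ring. Qed.

Lemma defect_around_lin pre post c y z :
  defect_around pre post (c *: y + z) = c * defect_around pre post y + defect_around pre post z.
Proof.
have e1 : word_val pre * (c *: y + z) * word_val post * s i =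
    c *: (word_val pre * y * word_val post * s i) + word_val pre * z * word_val post * s i.
  by rewrite mulrDr !mulrDl -scalerAr -!scalerAl.
have e2 : (c *: y + z) * word_val post = c *: (y * word_val post) + z * word_val post.
  by rewrite mulrDl -scalerAl.
have e3 : word_val pre * (c *: y + z) = c *: (word_val pre * y) + word_val pre * z.
  by rewrite mulrDr -scalerAr.
by rewrite /defect_around e1 e2 e3 tau_lin contractions_linr contractions_linl; ring.
Qed.

Lemma sd_defect_centred pre j e post :
  sd_defect (pre ++ (j, e, true) :: post) =
  sd_defect (pre ++ (j, e, false) :: post) - moment j e * sd_defect (pre ++ post).
Proof.
rewrite !sd_defect_atom sd_defect_cat atom_val_centred defect_around_lin.
have -> : contraction (j, e, true) = contraction (j, e, false) by [].
by ring.
Qed.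

Lemma contraction_merge j e f c c' c'' P Q :
  contraction (j, e, c) P (s j ^+ f * Q) + contraction (j, f, c') (P * s j ^+ e) Q =
  contraction (j, (e + f)%N, c'') P Q.
Proof.
rewrite /contraction /atom_idx /atom_exp /=; case: eqP => [->|_]; last by rewrite addr0.
rewrite big_split_ord /=; congr (_ + _); apply: eq_bigr => a _ /=.
  by rewrite mulrA -exprD; congr (_ * tau (_ ^+ _ * _)); have := ltn_ord a; lia.
by rewrite -mulrA -exprD; congr (_ * tau (_ ^+ _ * _)); have := ltn_ord a; lia.
Qed.

Lemma sd_defect_merge pre j e f post :
  sd_defect (pre ++ (j, e, false) :: (j, f, false) :: post) =
  sd_defect (pre ++ (j, (e + f)%N, false) :: post).
Proof.
rewrite !sd_defect_atom /defect_around /= !atom_val_uncentred !word_val_cons.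
rewrite atom_val_uncentred !mulr1 exprD.
rewrite -(contraction_merge j e f false false false (word_val pre) (word_val post)).
by rewrite !mulrA; ring.
Qed.

Lemma contraction_centred_left pre x Q :
  pre != [::] -> all atom_centred pre -> alternating (rcons pre x) ->
  contraction x (word_val pre) Q = 0.
Proof.
rewrite /contraction => pre_nz pre_c alt_x; case: eqP => // x_i; apply: big1 => a _.
rewrite tau_word_val_mul_pow ?mul0r //.
by move: alt_x; rewrite /alternating !map_rcons x_i.
Qed.

Lemma contraction_centred_right x l P :
  l != [::] -> all atom_centred l -> alternating (x :: l) ->
  contraction x P (word_val l) = 0.
Proof.
rewrite /contraction => l_nz l_c alt_x; case: eqP => // x_i; apply: big1 => a _.
by rewrite tau_pow_mul_word_val ?mulr0 // /alternating /= -x_i.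
Qed.

Lemma contractions_centred pre l :
  pre != [::] -> all atom_centred (pre ++ l) -> alternating (pre ++ l) ->
  contractions (word_val pre) l 1 = 0.
Proof.
elim: l pre => [//|x l IH] pre pre_nz; rewrite -cat_rcons => c_l alt_l /=.
have := c_l; rewrite all_cat all_rcons => /andP [/andP [_ pre_c] _].
have alt_x : alternating (rcons pre x).
  by move: alt_l; rewrite /alternating map_cat => /cat_sorted2 [].
rewrite contraction_centred_left // -word_val_rcons IH ?addr0 //.
by case: pre {pre_nz c_l alt_l pre_c alt_x}.
Qed.

Lemma sd_defect_nil : sd_defect [::] = 0.
Proof. by rewrite /sd_defect /= word_val_nil mul1r subr0; apply: moment1. Qed.

Lemma sd_defect_centred_atom x : atom_centred x -> sd_defect [:: x] = 0.
Proof.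
case: x => [[j e] []] // _; rewrite /sd_defect /= word_val_cons word_val_nil !mulr1 addr0.
rewrite /contraction /=; have [-> | j_i] := eqVneq j i; last first.
  rewrite subr0 -(atom_val_centred1 i) -[atom_val (i, _, _)]mulr1 -word_val_nil.
  by rewrite -!word_val_cons free_centred_word //= /alternating /= j_i.
rewrite /atom_val /= mulrBl -exprSr -scalerAl mul1r (tauB tau_lin) (tauZ tau_lin).
rewrite -[tau (s i)]/(moment i 1) moment1 mulr0 subr0.
rewrite -/(moment i e.+1) (semicircle_momentS (tau_s_even i) (tau_s_odd i)).
by apply/eqP; rewrite subr_eq0; apply/eqP/eq_bigr => a _; rewrite mul1r mulr1.
Qed.

Lemma tau_centred_word_mul_s l :
  (1 < size l)%N -> all atom_centred l -> alternating l -> tau (word_val l * s i) = 0.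
Proof.
case/lastP: l => // l z; rewrite size_rcons ltnS all_rcons => l_nz /andP [z_c l_c] alt_z.
have {}l_nz : l != [::] by rewrite -size_eq0 -lt0n.
rewrite word_val_rcons -mulrA.
have [z_i | z_i] := eqVneq (atom_idx z) i; last first.
  rewrite -(atom_val_centred1 i) mulrA -!word_val_rcons free_centred_word //.
  - by rewrite -size_eq0 size_rcons.
  - by rewrite !all_rcons z_c l_c.
  - by apply: alternating_rcons2; rewrite // eq_sym.
have alt_pow a : alternating (rcons l (i, a, true)).
  by move: alt_z; rewrite /alternating !map_rcons z_i.
case: z z_c {alt_z} z_i => [[j e] []] // _; rewrite /atom_idx /= => ->.
have -> : atom_val (i, e, true) * s i = s i ^+ e.+1 - moment i e *: s i ^+ 1.
  by rewrite /atom_val /= mulrBl -exprSr -scalerAl mul1r.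
rewrite mulrBr -scalerAr (tauB tau_lin) (tauZ tau_lin).
by rewrite !tau_word_val_mul_pow ?mulr0 ?subr0.
Qed.

Lemma sd_defect_centred_alternating l :
  all atom_centred l -> alternating l -> sd_defect l = 0.
Proof.
case: l => [|x [|y l]] l_c alt_l; first exact: sd_defect_nil.
  by apply: sd_defect_centred_atom; rewrite /= andbT in l_c.
have /andP [x_c yl_c] := l_c.
rewrite /sd_defect tau_centred_word_mul_s // -cat1s contractions_cat mul1r.
rewrite contractions_centred // /= word_val_nil mul1r mulr1.
by rewrite contraction_centred_right // !addr0 subrr.
Qed.

Definition weight (l : seq atom) : nat := \sum_(x <- l) (atom_exp x).+1.

Lemma weight_cat l1 l2 : weight (l1 ++ l2) = (weight l1 + weight l2)%N.
Proof. exact: big_cat. Qed.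

Lemma weight_cons x l : weight (x :: l) = ((atom_exp x).+1 + weight l)%N.
Proof. exact: big_cons. Qed.

Lemma sd_defect_recentre pre j e c c' post :
  (forall l, (weight l < weight (pre ++ (j, e, c) :: post))%N -> sd_defect l = 0) ->
  sd_defect (pre ++ (j, e, c) :: post) = sd_defect (pre ++ (j, e, c') :: post).
Proof.
move=> IH; have short : sd_defect (pre ++ post) = 0.
  by apply: IH; rewrite !weight_cat weight_cons; lia.
suff uncentre c0 :
    sd_defect (pre ++ (j, e, c0) :: post) = sd_defect (pre ++ (j, e, false) :: post).
  by rewrite !uncentre.
by case: c0 => //; rewrite sd_defect_centred short mulr0 subr0.
Qed.

Definition centre (x : atom) : atom := (atom_idx x, atom_exp x, true).

Lemma sd_defect_centre_all K :
  (forall l, (weight l < K)%N -> sd_defect l = 0) ->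
  forall post pre, weight (pre ++ post) = K ->
  sd_defect (pre ++ post) = sd_defect (pre ++ map centre post).
Proof.
move=> IH; elim=> [//|[[j e] c] post IHpost] pre wK /=.
rewrite (@sd_defect_recentre pre j e c true post); last by rewrite wK.
by rewrite -cat_rcons IHpost cat_rcons // -wK !weight_cat !weight_cons.
Qed.

Lemma not_alternating_split l : ~~ alternating l ->
  exists pre x y post, l = pre ++ x :: y :: post /\ atom_idx x = atom_idx y.
Proof.
elim: l => [//|a l IH]; case: l IH => [//|b l] IH.
rewrite /alternating /= negb_and negbK => /orP [/eqP ab | nalt]; first by exists [::], a, b, l.
have [pre [x [y [post [-> xy]]]]] := IH nalt.
by exists (a :: pre), x, y, post.
Qed.

Lemma sd_defect_eq0 l : sd_defect l = 0.
Proof.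
elim: {l}(weight l).+1 {-2}l (ltnSn (weight l)) => // K IHK l; rewrite ltnS => l_K.
have IH l' : (weight l' < weight l)%N -> sd_defect l' = 0.
  by move=> ?; apply: IHK; lia.
have [alt_l | /not_alternating_split [pre [[[j e] c] [[[j' f] c'] [post [l_eq jj]]]]]] :=
  boolP (alternating l).
  rewrite -[l]cat0s (sd_defect_centre_all IH) // sd_defect_centred_alternating //.
    by rewrite all_map; apply/allP.
  by rewrite /alternating -map_comp.
rewrite /atom_idx /= in jj; subst l j'.
rewrite (@sd_defect_recentre pre j e c false) // -cat_rcons.
rewrite (@sd_defect_recentre _ j f c' false); last first.
  by move=> l' lt; apply: IH; move: lt; rewrite cat_rcons !weight_cat !weight_cons.
rewrite cat_rcons sd_defect_merge IH // !weight_cat !weight_cons /atom_exp /=; lia.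
Qed.

Definition word_s (w : seq 'I_n) : A := \prod_(j <- w) s j.

Let letters (w : seq 'I_n) : seq atom := map (fun j => (j, 1%N, false)) w.

Let word_val_letters w : word_val (letters w) = word_s w.
Proof.
by rewrite /word_val big_map; apply: eq_bigr => j _; rewrite atom_val_uncentred expr1.
Qed.

Let contractions_letters P w Q :
  contractions P (letters w) Q =
  \sum_(0 <= t < size w) (if nth i w t == i then
    tau (P * word_s (take t w)) * tau (word_s (drop t.+1 w) * Q) else 0).
Proof.
elim: w P => [|j w IH] P /=; first by rewrite big_geq.
rewrite big_nat_recl // IH word_val_letters atom_val_uncentred expr1 /contraction /= drop0.
congr (_ + _); last by apply: eq_bigr => t _; rewrite /word_s big_cons mulrA.
rewrite /atom_idx /atom_exp /=; case: eqP => // _.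
by rewrite big_ord1 /= !expr0 mul1r /word_s big_nil mulr1.
Qed.

Lemma tau_word_s_mul_s w :
  tau (word_s w * s i) =
  \sum_(0 <= t < size w) (if nth i w t == i then
    tau (word_s (take t w)) * tau (word_s (drop t.+1 w)) else 0).
Proof.
have /eqP := sd_defect_eq0 (letters w).
rewrite /sd_defect subr_eq0 word_val_letters contractions_letters => /eqP ->.
by apply: eq_bigr => t _; rewrite mul1r mulr1.
Qed.

End FreeSemicircularWords.

Section PartialTrace.
Variables (R : realType) (A : algType R[i]) (tau : A -> R[i]) (d : nat).
Hypothesis tau_lin : forall (a b : A) (c : R[i]), tau (c *: a + b) = c * tau a + tau b.

Lemma tensM (M N : 'M[R[i]]_d) (a b : A) : tens M a * tens N b = tens (M *m N) (a * b).
Proof.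
apply/matrixP => x y; rewrite /tens -mulmxE !mxE scaler_suml.
by apply: eq_bigr => z _; rewrite !mxE -scalerAl -scalerAr scalerA.
Qed.

Lemma tens1 : tens (1%:M : 'M_d) (1 : A) = 1.
Proof. by apply/matrixP => x y; rewrite !mxE; case: eqP; rewrite ?scale1r ?scale0r. Qed.

Lemma tens0 (a : A) : tens (0 : 'M_d) a = 0.
Proof. by apply/matrixP => x y; rewrite !mxE scale0r. Qed.

Lemma ptrD (X Y : 'M[A]_d) : ptr tau (X + Y) = ptr tau X + ptr tau Y.
Proof. by apply/matrixP => x y; rewrite !mxE (tauD tau_lin). Qed.

Lemma ptr_sum (I : Type) (r : seq I) (P : pred I) (F : I -> 'M[A]_d) :
  ptr tau (\sum_(k <- r | P k) F k) = \sum_(k <- r | P k) ptr tau (F k).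
Proof.
apply: (big_morph _ ptrD); apply/matrixP => x y; rewrite !mxE; exact: tau0.
Qed.

Lemma ptr_tens (M : 'M_d) a : ptr tau (tens M a) = tau a *: M.
Proof. by apply/matrixP => x y; rewrite !mxE (tauZ tau_lin) mulrC. Qed.

Lemma ptr_mul_tens1 (P : 'M[A]_d) M : ptr tau (P * tens M 1) = ptr tau P *m M.
Proof.
apply/matrixP => x y; rewrite /ptr /tens -mulmxE !mxE (tau_sum tau_lin).
by apply: eq_bigr => z _; rewrite !mxE -scalerAr mulr1 (tauZ tau_lin) mulrC.
Qed.

Lemma ptr_tens1_mul (P : 'M[A]_d) M : ptr tau (tens M 1 * P) = M *m ptr tau P.
Proof.
apply/matrixP => x y; rewrite /ptr /tens -mulmxE !mxE (tau_sum tau_lin).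
by apply: eq_bigr => z _; rewrite !mxE -scalerAl mul1r (tauZ tau_lin).
Qed.

End PartialTrace.

Section PencilProducts.
Variables (R : realType) (A : algType R[i]) (tau : A -> R[i]) (n d : nat) (s : 'I_n -> A).
Hypothesis tau_lin : forall (a b : A) (c : R[i]), tau (c *: a + b) = c * tau a + tau b.
Hypothesis tau1 : tau 1 = 1.
Hypothesis tau_s_even : forall j m, tau (s j ^+ m.*2) = (catalan m)%:R.
Hypothesis tau_s_odd : forall j m, tau (s j ^+ m.*2.+1) = 0.
Hypothesis s_free : free_family tau s.

Notation phi := (ptr tau).
Notation coefs := (option 'I_n -> 'M[R[i]]_d).

Definition pencil (m : coefs) : 'M[A]_d :=
  tens (m None) 1 + \sum_(j < n) tens (m (Some j)) (s j).

Definition pencil_prod (Ms : seq coefs) : 'M[A]_d := \prod_(m <- Ms) pencil m.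

Lemma pencil_prod_nil : pencil_prod [::] = 1.
Proof. exact: big_nil. Qed.

Lemma pencil_prod_cat Ms Ms' : pencil_prod (Ms ++ Ms') = pencil_prod Ms * pencil_prod Ms'.
Proof. exact: big_cat. Qed.

Lemma pencil_prod_cons m Ms : pencil_prod (m :: Ms) = pencil m * pencil_prod Ms.
Proof. exact: big_cons. Qed.

Lemma word_s_rcons w j : word_s s (rcons w j) = word_s s w * s j.
Proof. by rewrite /word_s -cats1 big_cat big_seq1. Qed.

Lemma ptr_tens_word_mul_pencil M w m Y :
  phi (tens M (word_s s w) * pencil m * Y) =
  phi (tens (M *m m None) (word_s s w) * Y)
  + \sum_(j < n) phi (tens (M *m m (Some j)) (word_s s (rcons w j)) * Y).
Proof.
rewrite /pencil mulrDr tensM mulr1 mulr_sumr !mulrDl mulr_suml ptrD // ptr_sum //.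
by congr (_ + _); apply: eq_bigr => j _; rewrite tensM word_s_rcons.
Qed.

Variables (i : 'I_n) (N : 'M[R[i]]_d).

Definition word_pairings M w Ms :=
  \sum_(0 <= t < size w) (if nth i w t == i then
     tau (word_s s (take t w)) *: (phi (tens M (word_s s (drop t.+1 w)) * pencil_prod Ms) *m N)
   else 0).

Definition pencil_pairings M w Ms :=
  \sum_(0 <= r < size Ms)
     phi (tens M (word_s s w) * pencil_prod (take r Ms)) *m nth (fun=> 0) Ms r (Some i)
     *m phi (pencil_prod (drop r.+1 Ms)) *m N.

Lemma word_pairings_expand M w m Ms :
  word_pairings (M *m m None) w Ms + \sum_(j < n) word_pairings (M *m m (Some j)) (rcons w j) Ms =
  word_pairings M w (m :: Ms) + tau (word_s s w) *: (M *m m (Some i) *m phi (pencil_prod Ms) *m N).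
Proof.
rewrite /word_pairings addrC.
under eq_bigr => j _ do rewrite size_rcons big_nat_recr //=.
rewrite big_split /= addrAC [X in X + _ = _]addrC; congr (_ + _); last first.
  rewrite (bigD1 i) //= big1 => [|j /negbTE j_i]; last by rewrite nth_rcons ltnn eqxx j_i.
  rewrite nth_rcons ltnn !eqxx -cats1 take_size_cat // drop_oversize ?size_cat ?addn1 //.
  by rewrite addr0 /word_s big_nil ptr_tens1_mul.
rewrite exchange_big /= -big_split /=; apply: eq_big_nat => t /andP [_ t_w].
under eq_bigr => j _ do rewrite nth_rcons t_w -cats1 takel_cat ?(ltnW t_w) // cats1 drop_rcons //.
case: ifP => _; last by rewrite big1 ?addr0.
rewrite -scaler_sumr -scalerDr; congr (_ *: _).
by rewrite -mulmx_suml -mulmxDl pencil_prod_cons mulrA ptr_tens_word_mul_pencil.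
Qed.

Lemma pencil_pairings_expand M w m Ms :
  pencil_pairings (M *m m None) w Ms + \sum_(j < n) pencil_pairings (M *m m (Some j)) (rcons w j) Ms
  + tau (word_s s w) *: (M *m m (Some i) *m phi (pencil_prod Ms) *m N) =
  pencil_pairings M w (m :: Ms).
Proof.
rewrite /pencil_pairings /= big_nat_recl //= pencil_prod_nil mulr1 ptr_tens // -!scalemxAl addrC.
congr (_ + _); first by rewrite drop0.
rewrite exchange_big /= -big_split /=; apply: eq_bigr => r _.
by rewrite pencil_prod_cons mulrA ptr_tens_word_mul_pencil !mulmxDl !mulmx_suml.
Qed.

Lemma ptr_tens_word_pencil_prod_mul_s Ms M w :
  phi (tens M (word_s s w) * pencil_prod Ms * tens N (s i)) =
  word_pairings M w Ms + pencil_pairings M w Ms.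
Proof.
elim: Ms M w => [|m Ms IH] M w.
  rewrite /pencil_pairings big_geq // addr0 pencil_prod_nil mulr1 tensM ptr_tens //.
  rewrite (tau_word_s_mul_s tau_lin tau1 tau_s_even tau_s_odd s_free) scaler_suml.
  apply: eq_bigr => t _; case: ifP => _; last by rewrite scale0r.
  by rewrite pencil_prod_nil mulr1 ptr_tens // -scalerA scalemxAl.
rewrite pencil_prod_cons mulrA -(mulrA _ (pencil_prod Ms)) ptr_tens_word_mul_pencil !mulrA IH.
under eq_bigr => j _ do rewrite mulrA IH.
rewrite big_split /= addrACA word_pairings_expand -pencil_pairings_expand.
by rewrite -!addrA; congr (_ + _); rewrite addrC -!addrA.
Qed.

Lemma ptr_pencil_prod_mul_s Ms :
  phi (pencil_prod Ms * tens N (s i)) =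
  \sum_(0 <= r < size Ms) phi (pencil_prod (take r Ms)) *m nth (fun=> 0) Ms r (Some i)
     *m phi (pencil_prod (drop r.+1 Ms)) *m N.
Proof.
have := ptr_tens_word_pencil_prod_mul_s Ms 1%:M [::].
rewrite /word_pairings /pencil_pairings big_geq // add0r /word_s big_nil tens1 mul1r => ->.
by apply: eq_bigr => r _; rewrite mul1r.
Qed.

End PencilProducts.

Section XfreeMoments.
Variables (R : realType) (A : algType R[i]) (tau : A -> R[i]) (n d : nat) (s : 'I_n -> A).
Variables (A0 : 'M[R[i]]_d) (Ai : 'I_n -> 'M[R[i]]_d).
Hypothesis tau_lin : forall (a b : A) (c : R[i]), tau (c *: a + b) = c * tau a + tau b.
Hypothesis tau1 : tau 1 = 1.
Hypothesis tau_s_even : forall j m, tau (s j ^+ m.*2) = (catalan m)%:R.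
Hypothesis tau_s_odd : forall j m, tau (s j ^+ m.*2.+1) = 0.
Hypothesis s_free : free_family tau s.

Notation phi := (ptr tau).
Notation X := (Xfree s A0 Ai).

Definition xfree_coefs (o : option 'I_n) : 'M[R[i]]_d :=
  if o is Some j then Ai j else A0.

Definition const_coefs (B : 'M[R[i]]_d) (o : option 'I_n) : 'M[R[i]]_d :=
  if o is Some _ then 0 else B.

Lemma pencil_prod_xfree p : pencil_prod s (nseq p xfree_coefs) = X ^+ p.
Proof.
by elim: p => [|p IH]; rewrite ?pencil_prod_nil // exprS pencil_prod_cons IH.
Qed.

Lemma pencil_prod_sandwich p B q :
  pencil_prod s (nseq p xfree_coefs ++ const_coefs B :: nseq q xfree_coefs) =
  X ^+ p * tens B 1 * X ^+ q.
Proof.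
have const_B : pencil s (const_coefs B) = tens B 1.
  by rewrite /pencil big1 ?addr0 // => j _; rewrite tens0.
by rewrite pencil_prod_cat pencil_prod_cons const_B !pencil_prod_xfree mulrA.
Qed.

Lemma ptr_mul_xfree P :
  phi (P * X) = phi P *m A0 + \sum_(j < n) phi (P * tens (Ai j) (s j)).
Proof.
by rewrite /Xfree mulrDr ptrD // ptr_mul_tens1 // mulr_sumr ptr_sum.
Qed.

Let ptr_mul_s := @ptr_pencil_prod_mul_s R A tau n d s tau_lin tau1 tau_s_even tau_s_odd s_free.

Lemma ptr_xfree_pow_mul_s j N p :
  phi (X ^+ p * tens N (s j)) =
  \sum_(k < p) phi (X ^+ k) *m Ai j *m phi (X ^+ (p - 1 - k)) *m N.
Proof.
rewrite -(pencil_prod_xfree p) ptr_mul_s size_nseq big_mkord; apply: eq_bigr => k _.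
rewrite (take_nseq _ (ltnW (ltn_ord k))) drop_nseq nth_nseq ltn_ord.
by rewrite !pencil_prod_xfree -subnDA add1n.
Qed.

Lemma ptr_xfree_sandwich_mul_s j N p B q :
  phi (X ^+ p * tens B 1 * X ^+ q * tens N (s j)) =
  \sum_(k < p) phi (X ^+ k) *m Ai j *m phi (X ^+ (p - 1 - k) * tens B 1 * X ^+ q) *m N
  + \sum_(k < q) phi (X ^+ p * tens B 1 * X ^+ k) *m Ai j *m phi (X ^+ (q - 1 - k)) *m N.
Proof.
rewrite -(pencil_prod_sandwich p B q) ptr_mul_s.
pose F pre (m : option 'I_n -> 'M_d) suf :=
  phi (pencil_prod s pre) *m m (Some j) *m phi (pencil_prod s suf) *m N.
apply: eq_trans (big_pointed_cat (fun=> 0) F _ _) _.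
have F_const pre suf : F pre (const_coefs B) suf = 0 by rewrite /F mulmx0 !mul0mx.
rewrite [size (_ :: _)]/= !size_nseq (big_nat_recl _ _ _ (leq0n _)) F_const add0r !big_mkord.
congr (_ + _); apply: eq_bigr => k _.
  rewrite (take_nseq _ (ltnW (ltn_ord k))) drop_nseq nth_nseq ltn_ord /F.
  by rewrite pencil_prod_sandwich pencil_prod_xfree -subnDA add1n.
rewrite [take _ _]/= [nth _ _ _]/= [drop _ _]/=.
rewrite (take_nseq _ (ltnW (ltn_ord k))) drop_nseq nth_nseq ltn_ord /F.
by rewrite pencil_prod_sandwich pencil_prod_xfree -subnDA add1n.
Qed.

End XfreeMoments.

Unset Implicit Arguments.

Theorem lemma6p1 (R : realType) (A : algType R[i]) (star : A -> A)
  (tau : A -> R[i]) (n d : nat) (s : 'I_n -> A)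
  (A0 : 'M[R[i]]_d) (Ai : 'I_n -> 'M[R[i]]_d) :
  star_prob_space star tau ->
  (forall i, std_semicircular star tau (s i)) ->
  free_family tau s ->
  let X := Xfree s A0 Ai in
  let phi := ptr tau in
  (forall p : nat, (2 <= p)%N ->
     phi (X ^+ p) =
       phi (X ^+ p.-1) *m A0
       + \sum_(i < n) \sum_(k < p.-1)
           phi (X ^+ k) *m Ai i *m phi (X ^+ (p - 2 - k)) *m Ai i)
  /\
  (forall (B : 'M[R[i]]_d) (p q : nat), (1 <= p)%N -> (1 <= q)%N ->
     phi (X ^+ p * tens B 1 * X ^+ q) =
       phi (X ^+ p * tens B 1 * X ^+ q.-1) *m A0
       + \sum_(i < n) \sum_(k < p)
           phi (X ^+ k) *m Ai i *m phi (X ^+ (p - 1 - k) * tens B 1 * X ^+ q.-1) *m Ai i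
       + (if (2 <= q)%N then
            \sum_(i < n) \sum_(k < q.-1)
              phi (X ^+ p * tens B 1 * X ^+ k) *m Ai i *m phi (X ^+ (q - 2 - k)) *m Ai i
          else 0)).
Proof.
move=> [_ [tau_lin tau1 _] _ _] s_sc s_free X phi; rewrite {}/phi {}/X.
have tau_s_even j m : tau (s j ^+ m.*2) = (catalan m)%:R by case: (s_sc j).
have tau_s_odd j m : tau (s j ^+ m.*2.+1) = 0 by case: (s_sc j).
have pow_mul_s := ptr_xfree_pow_mul_s A0 Ai tau_lin tau1 tau_s_even tau_s_odd s_free.
have sandwich_mul_s := ptr_xfree_sandwich_mul_s A0 Ai tau_lin tau1 tau_s_even tau_s_odd s_free.
split=> [[|p] p_ge2 | B p [|q] p_gt0 q_gt0]; [by [] | | by [] |].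
  rewrite exprSr (ptr_mul_xfree s A0 Ai tau_lin); congr (_ + _).
  by apply: eq_bigr => j _; rewrite pow_mul_s.
rewrite exprSr mulrA (ptr_mul_xfree s A0 Ai tau_lin) -addrA; congr (_ + _).
under eq_bigr => j _ do rewrite sandwich_mul_s.
rewrite big_split; congr (_ + _).
by case: q {q_gt0} => [|q]; [rewrite big1 // => j _; rewrite big_ord0 |].
Qed.
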